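(* There is an absolute constant $C>0$ such that the following holds. Fix any $k\ge1$, any collection of $k$ groups with values in $[0,1]$, any target $q\in(0,1)$ and any step size $\eta\in(0,1]$. Running the Group Conditional ACI algorithm for $T$ rounds on any adversarial sequence $g_t\in[0,1]^k$, $\tau_t\in[0,1]$ yields, for every $i\in[k]$ with $T_i>0$, $$\left|\mathrm{Cov}(\Pi_T,G_i)-q\right|\le C\,\frac{\sqrt{\eta T(\eta k+1)}}{T_i\,\eta}.$$
   Context: Group Conditional ACI (GCACI) with coverage target $q$ and step size $\eta$: set $\theta_1=0\in\mathbb{R}^k$; at each round $t=1,\dots,T$ receive $g_t\in[0,1]^k$, predict $\hat\tau_t=\langle\theta_t,g_t\rangle$, receive $\tau_t\in[0,1]$; if $\hat\tau_t<\tau_t$ set $\theta_{t+1}=\theta_t+\eta q\,g_t$ (Update A), otherwise set $\theta_{t+1}=\theta_t-\eta(1-q)\,g_t$ (Update B). Here $g_{t,i}$ is the membership of round $t$ in group $G_i$; $T_i=\sum_{t=1}^T g_{t,i}$ and $\mathrm{Cov}(\Pi_T,G_i)=\frac{1}{T_i}\sum_{t=1}^T\mathbf{1}[\hat\tau_t\ge\tau_t]\,g_{t,i}$. *)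

From mathcomp Require Import all_boot all_order all_algebra.
Set Implicit Arguments. Unset Strict Implicit. Unset Printing Implicit Defensive.
Import Order.TTheory GRing.Theory Num.Theory.
Local Open Scope ring_scope.

(* Group Conditional ACI.  Rounds are indexed t = 0, ..., T-1 (paper: 1..T).
   g t : group membership vector of round t, tau t : realized score. *)

Section GCACI.
Variables (R : realFieldType) (k : nat) (q eta : R)
          (g : nat -> 'I_k -> R) (tau : nat -> R).

Definition gcaci_pred (th : {ffun 'I_k -> R}) (t : nat) : R :=
  \sum_(i < k) th i * g t i.

Fixpoint gcaci_theta (t : nat) : {ffun 'I_k -> R} :=
  match t with
  | 0 => [ffun _ => 0]
  | t'.+1 =>
      let th := gcaci_theta t' in
      if gcaci_pred th t' < tau t'
      then [ffun i => th i + eta * q * g t' i]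
      else [ffun i => th i - eta * (1 - q) * g t' i]
  end.

Definition gcaci_tauhat (t : nat) : R := gcaci_pred (gcaci_theta t) t.

Definition group_size (T : nat) (i : 'I_k) : R := \sum_(t < T) g t i.

Definition gcaci_cov (T : nat) (i : 'I_k) : R :=
  (group_size T i)^-1 *
  \sum_(t < T) (if tau t <= gcaci_tauhat t then 1 else 0) * g t i.
End GCACI.

From mathcomp Require Import all_boot all_order all_algebra.
From mathcomp Require Import reals.
From mathcomp Require Import ring lra.
Set Implicit Arguments. Unset Strict Implicit. Unset Printing Implicit Defensive.
Import Order.TTheory GRing.Theory Num.Theory.
Local Open Scope ring_scope.

(* The parameter vector records the coverage error: theta_T,i = eta (q T_i -
   #covered rounds of G_i), so Cov(Pi_T, G_i) - q = - theta_T,i / (eta T_i).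
   It remains to bound |theta_T,i| by the Euclidean norm of theta_T, which
   grows slowly: Update A moves along +g_t only when <theta_t, g_t> < tau_t <= 1,
   Update B along -g_t only when <theta_t, g_t> >= tau_t >= 0, so each round
   adds at most 2 eta + eta^2 k to the squared norm, whence
   |theta_T,i| <= sqrt(T (2 eta + eta^2 k)) <= 2 sqrt(eta T (eta k + 1)). *)

Definition sqr_norm (R : pzSemiRingType) (k : nat) (v : 'I_k -> R) : R :=
  \sum_(j < k) v j ^+ 2.

Lemma sqr_norm_ge0 (R : realDomainType) k (v : 'I_k -> R) : 0 <= sqr_norm v.
Proof. by apply: sumr_ge0 => j _; apply: sqr_ge0. Qed.

Lemma sqr_le_sqr_norm (R : realDomainType) k (v : 'I_k -> R) i :
  v i ^+ 2 <= sqr_norm v.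
Proof.
by rewrite /sqr_norm (bigD1 i) //= lerDl; apply: sumr_ge0 => j _; apply: sqr_ge0.
Qed.

Lemma sqr_norm_unit_cube (R : realDomainType) k (v : 'I_k -> R) :
  (forall j, 0 <= v j <= 1) -> sqr_norm v <= k%:R.
Proof.
move=> v01; rewrite -[k in k%:R]card_ord -sumr_const.
by apply: ler_sum => j _; have /andP[? ?] := v01 j; nra.
Qed.

Lemma sqr_norm_addZ (R : comNzRingType) k (u v : 'I_k -> R) (a : R) :
  sqr_norm (fun j => u j + a * v j) =
  sqr_norm u + 2 * a * (\sum_(j < k) u j * v j) + a ^+ 2 * sqr_norm v.
Proof.
by rewrite /sqr_norm !mulr_sumr -!big_split; apply: eq_bigr => j _ /=; ring.
Qed.

Lemma sqr_norm_addZ_le (R : realDomainType) k (u v : 'I_k -> R) (a b c : R) :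
  (forall j, 0 <= v j <= 1) -> `|a| <= b -> a * (\sum_(j < k) u j * v j) <= c ->
  sqr_norm (fun j => u j + a * v j) <= sqr_norm u + 2 * c + b ^+ 2 * k%:R.
Proof.
move=> v01 ab ac; rewrite sqr_norm_addZ.
have a2b2 : a ^+ 2 <= b ^+ 2.
  by rewrite -real_normK ?num_real // lerXn2r ?nnegrE ?(le_trans _ ab).
have Sk := sqr_norm_unit_cube v01.
have S0 := sqr_norm_ge0 v.
have b2_0 : 0 <= b ^+ 2 := sqr_ge0 b.
nra.
Qed.

Section GCACIAnalysis.
Variables (R : realFieldType) (k : nat) (q eta : R)
          (g : nat -> 'I_k -> R) (tau : nat -> R).

Notation theta := (gcaci_theta q eta g tau).
Notation covered t := (if tau t <= gcaci_tauhat q eta g tau t then 1 else 0).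

Lemma gcaci_thetaE T i :
  theta T i = eta * (q * group_size g T i - \sum_(t < T) covered t * g t i).
Proof.
elim: T => [|T IH]; first by rewrite /group_size !big_ord0 ffunE; ring.
rewrite /group_size !big_ord_recr /= -/(group_size g T i) /gcaci_tauhat /=.
by case: ltP => _; rewrite ffunE IH /gcaci_tauhat; ring.
Qed.

Lemma gcaci_cov_subE T i : 0 < group_size g T i -> 0 < eta ->
  gcaci_cov q eta g tau T i - q = - theta T i / (group_size g T i * eta).
Proof.
by move=> Ti0 eta0; rewrite /gcaci_cov gcaci_thetaE; field; rewrite !gt_eqF.
Qed.

Hypotheses (q01 : 0 < q < 1) (eta0 : 0 < eta)
  (g01 : forall t i, 0 <= g t i <= 1) (tau01 : forall t, 0 <= tau t <= 1).

Lemma gcaci_theta_sqr_norm_step t :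
  sqr_norm (theta t.+1) <= sqr_norm (theta t) + 2 * eta + eta ^+ 2 * k%:R.
Proof.
have /andP[q0 q1] := q01.
have /andP[tau0 tau1] := tau01 t.
rewrite /= /sqr_norm; case: ltP => upd; under eq_bigr do rewrite ffunE.
- have etaq0 : 0 < eta * q := mulr_gt0 eta0 q0.
  have etaq_le : eta * q <= eta by nra.
  apply: (sqr_norm_addZ_le (g01 t)); first by rewrite gtr0_norm.
  by rewrite -/(gcaci_pred _ _ _); nra.
- under eq_bigr do rewrite -mulNr.
  have eta1q0 : 0 <= eta * (1 - q) by rewrite mulr_ge0 ?subr_ge0 ?ltW.
  apply: (sqr_norm_addZ_le (g01 t)); first by rewrite normrN ger0_norm //; nra.
  rewrite -/(gcaci_pred _ _ _) mulNr (le_trans _ (ltW eta0)) // oppr_le0.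
  by rewrite mulr_ge0 //; lra.
Qed.

Lemma gcaci_theta_sqr_norm_le T :
  sqr_norm (theta T) <= T%:R * (2 * eta + eta ^+ 2 * k%:R).
Proof.
elim: T => [|T IH].
  by rewrite mul0r /sqr_norm big1 // => j _; rewrite ffunE expr0n.
by apply: le_trans (gcaci_theta_sqr_norm_step T) _; rewrite -natr1; lra.
Qed.

End GCACIAnalysis.

Lemma gcaci_theta_abs_le (R : rcfType) k (q eta : R) (g : nat -> 'I_k -> R) tau T i :
  0 < q < 1 -> 0 < eta -> (forall t i, 0 <= g t i <= 1) ->
  (forall t, 0 <= tau t <= 1) ->
  `|gcaci_theta q eta g tau T i| <= 2 * Num.sqrt (eta * T%:R * (eta * k%:R + 1)).
Proof.
move=> q01 eta0 g01 tau01.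
have T0 : 0 <= T%:R :> R := ler0n _ _; have k0 : 0 <= k%:R :> R := ler0n _ _.
have sqr_le : gcaci_theta q eta g tau T i ^+ 2 <= 4 * (eta * T%:R * (eta * k%:R + 1)).
  apply: le_trans (sqr_le_sqr_norm _ i) _.
  apply: le_trans (gcaci_theta_sqr_norm_le q01 eta0 g01 tau01 T) _.
  rewrite -subr_ge0 (_ : _ - _ = eta * T%:R * (3 * eta * k%:R + 2)); last by ring.
  by rewrite (mulr_ge0 (mulr_ge0 (ltW eta0) T0)) // addr_ge0 // !mulr_ge0 // ltW.
have sqrt4 : Num.sqrt 4 = 2 :> R.
  by rewrite (_ : 4 = 2 ^+ 2 :> R) ?sqrtr_sqr ?ger0_norm // expr2 -natrM.
by rewrite -sqrtr_sqr -sqrt4 -sqrtrM // ler_wsqrtr.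
Qed.

Theorem mainTheorem10 (R : realType) :
  exists C : R, 0 < C /\
  forall (k : nat) (q eta : R) (T : nat)
         (g : nat -> 'I_k -> R) (tau : nat -> R),
    (1 <= k)%N ->
    0 < q < 1 ->
    0 < eta <= 1 ->
    (forall t i, 0 <= g t i <= 1) ->
    (forall t, 0 <= tau t <= 1) ->
    forall i : 'I_k, 0 < group_size g T i ->
      `| gcaci_cov q eta g tau T i - q |
        <= C * Num.sqrt (eta * T%:R * (eta * k%:R + 1))
             / (group_size g T i * eta).
Proof.
exists 2; split => // k q eta T g tau _ q01 /andP[eta0 _] g01 tau01 i Ti0.
have scale0 : 0 < (group_size g T i * eta)^-1 by rewrite invr_gt0 mulr_gt0.
rewrite gcaci_cov_subE // normrM normrN (gtr0_norm scale0) ler_pM2r //.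
exact: gcaci_theta_abs_le.
Qed.
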